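(* Let $\chi\in\chi(G)$ be a character and $\lambda\in\Lambda^\chi$. There is a unique maximal subset $\mathcal M\subset[n]$ with respect to the property $L(\mathcal M)\subset S^\chi_\lambda$. Moreover $\mathcal M=\{i\in[n]:\langle\chi_i,\lambda\rangle\ge0\}$, and in particular $V([n]\setminus\mathcal M)=X_\lambda$.
   Context: $G$ diagonalizable over $\mathbf C$ acting on $X=\mathbf A^n_{\mathbf C}$ by $g\cdot x=(\chi_1(g)x_1,\dots,\chi_n(g)x_n)$. $\chi(G)$ characters, $\Gamma(G)$ one-parameter subgroups, pairing $\chi(\lambda(t))=t^{\langle\chi,\lambda\rangle}$ (extended to $\mathbf R$); fixed norm on $\Gamma(G)$ from an inner product on $\Gamma(G)_{\mathbf R}$ integral on $\Gamma(G)$. $[n]=\{1,\dots,n\}$. $X_\lambda=\{x:\lim_{t\to0}\lambda(t)x\text{ exists}\}=\{x:x_i=0\text{ whenever }\langle\chi_i,\lambda\rangle<0\}$. $x$ is $\chi$-unstable if some $\lambda$ with existing limit has $\langle\chi,\lambda\rangle<0$; for unstable $x$, $\lambda_{\chi,x}$ is the unique indivisible one-parameter subgroup with existing limit minimizing $\langle\chi,\lambda\rangle/\|\lambda\|$ among nonzero such. $\Lambda^\chi=\{\lambda_{\chi,x}:x\text{ unstable}\}$, $S^\chi_\lambda=\{x\text{ unstable}:\lambda_{\chi,x}=\lambda\}$. For $S\subset[n]$: $V(S)=\{x:x_i=0\ \forall i\in S\}$, $L(S)=\{x:x_i\ne0\iff i\in S\}$. *)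

From HB Require Import structures.
From mathcomp Require Import all_boot all_order all_algebra.
From mathcomp Require Import complex.
From mathcomp Require Import reals.
Set Implicit Arguments. Unset Strict Implicit. Unset Printing Implicit Defensive.
Import Order.TTheory GRing.Theory Num.Theory.
Local Open Scope ring_scope.

(* Model:
   - Gamma(G) = Z^r, one-parameter subgroups are 'rV[int]_r;
   - chi(G) is represented through its pairing with Gamma(G): a character
     is the row vector 'rV[int]_r of its values <chi, e_j>, and
     <chi, lambda> is the dot product;
   - the inner product on Gamma(G)_R is given by a symmetric positive definite
     integer matrix Q (integral on Gamma(G));
   - points of X = A^n_C are row vectors 'rV[R[i]]_n, R the real numbers. *)

Definition pairing (r : nat) (chi lam : 'rV[int]_r) : int :=
  \sum_(j < r) chi 0 j * lam 0 j.

Definition ipQ (r : nat) (Q : 'M[int]_r) (l m : 'rV[int]_r) : int :=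
  (l *m Q *m m^T) 0 0.

Definition inner_product_mx (R : realType) (r : nat) (Q : 'M[int]_r) : Prop :=
  Q^T = Q /\
  forall v : 'rV[R]_r, v != 0 -> 0 < (v *m map_mx (fun z : int => z%:~R) Q *m v^T) 0 0.

Definition normQ (R : realType) (r : nat) (Q : 'M[int]_r) (l : 'rV[int]_r) : R :=
  Num.sqrt ((ipQ Q l l)%:~R).

Definition indivisible (r : nat) (l : 'rV[int]_r) : Prop :=
  forall (k : int) (m : 'rV[int]_r), l = k *: m -> `|k| = 1.

(* X_lambda: lim_{t->0} lambda(t) x exists *)
Definition X_lam (R : realType) (n r : nat) (chis : 'I_n -> 'rV[int]_r)
  (l : 'rV[int]_r) (x : 'rV[R[i]]_n) : Prop :=
  forall i : 'I_n, pairing (chis i) l < 0 -> x 0 i = 0.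

Definition unstable (R : realType) (n r : nat) (chis : 'I_n -> 'rV[int]_r)
  (chi : 'rV[int]_r) (x : 'rV[R[i]]_n) : Prop :=
  exists l : 'rV[int]_r, X_lam chis l x /\ pairing chi l < 0.

Definition ratio (R : realType) (r : nat) (Q : 'M[int]_r) (chi l : 'rV[int]_r) : R :=
  (pairing chi l)%:~R / normQ R Q l.

Definition is_lambda_chi (R : realType) (n r : nat) (chis : 'I_n -> 'rV[int]_r)
  (Q : 'M[int]_r) (chi : 'rV[int]_r) (x : 'rV[R[i]]_n) (l : 'rV[int]_r) : Prop :=
  indivisible l /\ X_lam chis l x /\
  forall m : 'rV[int]_r, m != 0 -> X_lam chis m x -> ratio R Q chi l <= ratio R Q chi m.

Definition S_chi (R : realType) (n r : nat) (chis : 'I_n -> 'rV[int]_r)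
  (Q : 'M[int]_r) (chi l : 'rV[int]_r) (x : 'rV[R[i]]_n) : Prop :=
  unstable chis chi x /\ is_lambda_chi chis Q chi x l.

Definition Lambda_chi (R : realType) (n r : nat) (chis : 'I_n -> 'rV[int]_r)
  (Q : 'M[int]_r) (chi l : 'rV[int]_r) : Prop :=
  exists x : 'rV[R[i]]_n, S_chi chis Q chi l x.

Definition Vset (R : realType) (n : nat) (S : {set 'I_n}) (x : 'rV[R[i]]_n) : Prop :=
  forall i, i \in S -> x 0 i = 0.

Definition Lset (R : realType) (n : nat) (S : {set 'I_n}) (x : 'rV[R[i]]_n) : Prop :=
  forall i, x 0 i != 0 <-> i \in S.

(* Since X_lam = V([n] \ M), M is the largest support a point of X_lam can
   have.  Shrinking the support of a point only enlarges the set of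
   one-parameter subgroups with a limit, so a point of X_lam whose support
   contains that of a point of S_lam inherits the optimality of lam; applied
   to the point witnessing lam in Lambda_chi, this gives L(M) in S_lam.
   Conversely, the indicator vector of any M' with L(M') in S_lam lies in
   X_lam, which forces M' to be contained in M. *)

From Pilot Require Import Defs.
From HB Require Import structures.
From mathcomp Require Import all_boot all_order all_algebra.
From mathcomp Require Import complex.
From mathcomp Require Import reals.
Set Implicit Arguments. Unset Strict Implicit. Unset Printing Implicit Defensive.
Import Order.TTheory GRing.Theory Num.Theory.
Local Open Scope ring_scope.

Lemma greatest_unique_maximal (T : finType) (P : {set T} -> Prop) (M : {set T}) :
  P M -> (forall M', P M' -> M' \subset M) ->
  (forall M', P M' -> M \subset M' -> M' = M) /\
  (forall M', P M' -> (forall M'', P M'' -> M' \subset M'' -> M'' = M') -> M' = M).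
Proof.
move=> PM greatest; split.
  by move=> M' PM' sMM'; apply/eqP; rewrite eqEsubset sMM' greatest.
by move=> M' PM' maxM'; apply/esym/maxM'; last exact: greatest.
Qed.

Lemma pairingr0 (r : nat) (chi : 'rV[int]_r) : pairing chi 0 = 0.
Proof. by rewrite /pairing big1 // => j _; rewrite mxE mulr0. Qed.

Section Ratio.

Variables (R : realType) (r : nat) (Q : 'M[int]_r).
Hypothesis hQ : inner_product_mx R Q.

Lemma normQ_gt0 (l : 'rV[int]_r) : l != 0 -> 0 < normQ R Q l.
Proof.
move=> l0; rewrite /normQ sqrtr_gt0.
pose lR := map_mx (fun z : int => z%:~R : R) l.
have lR0 : lR != 0.
  apply: contra l0 => /eqP lR0; apply/eqP/matrixP => i j.
  by have /eqP := congr1 (fun A : 'rV[R]_r => A i j) lR0; rewrite !mxE intr_eq0 => /eqP.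
have := hQ.2 _ lR0.
by rewrite /lR /ipQ map_trmx -!map_mxM mxE.
Qed.

Lemma ratio_lt0 (chi l : 'rV[int]_r) : (Defs.ratio R Q chi l < 0) = (pairing chi l < 0).
Proof.
have [->|l0] := eqVneq l 0; first by rewrite /Defs.ratio pairingr0 mul0r ltxx.
by rewrite /Defs.ratio pmulr_llt0 ?invr_gt0 ?normQ_gt0 // ltrz0.
Qed.

End Ratio.

Section Instability.

Variables (R : realType) (n r : nat) (chis : 'I_n -> 'rV[int]_r).

Lemma X_lam_supp (m : 'rV[int]_r) (x y : 'rV[R[i]]_n) :
  (forall i, x 0 i = 0 -> y 0 i = 0) -> X_lam chis m x -> X_lam chis m y.
Proof. by move=> supp_yx Xx i hi; apply/supp_yx/Xx. Qed.

Lemma Vset_nonneg_compl (l : 'rV[int]_r) (x : 'rV[R[i]]_n) :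
  Vset (~: [set i | 0 <= pairing (chis i) l]) x <-> X_lam chis l x.
Proof.
by split=> V i; rewrite ?inE -?ltNge => hi; apply: V; rewrite ?inE -?ltNge.
Qed.

Lemma Lset_Vset_compl (S : {set 'I_n}) (x : 'rV[R[i]]_n) :
  Lset S x -> Vset (~: S) x.
Proof.
move=> Lx i; rewrite inE => iNS; apply/eqP; apply: contraNT iNS.
exact: (proj1 (Lx i)).
Qed.

Lemma Lset_Vset_supp (S : {set 'I_n}) (x y : 'rV[R[i]]_n) :
  Lset S x -> Vset (~: S) y -> forall i, x 0 i = 0 -> y 0 i = 0.
Proof.
move=> Lx Vy i xi0; apply: Vy; rewrite inE.
by apply/negP => /(proj2 (Lx i)); rewrite xi0 eqxx.
Qed.

Lemma Lset_Vset_subset (S T : {set 'I_n}) (x : 'rV[R[i]]_n) :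
  Lset S x -> Vset (~: T) x -> S \subset T.
Proof.
move=> Lx Vx; apply/subsetP => i /(proj2 (Lx i)); apply: contraNT => iNT.
by rewrite Vx // inE.
Qed.

Lemma Lset_indicator (S : {set 'I_n}) :
  Lset S (\row_j (j \in S)%:R : 'rV[R[i]]_n).
Proof. by move=> j; rewrite mxE; case: (j \in S); rewrite ?oner_eq0 ?eqxx. Qed.

Variables (Q : 'M[int]_r) (chi : 'rV[int]_r).

Lemma S_chi_X_lam (l : 'rV[int]_r) (x : 'rV[R[i]]_n) :
  S_chi chis Q chi l x -> X_lam chis l x.
Proof. by case=> _ [_ []]. Qed.

Hypothesis hQ : inner_product_mx R Q.

Lemma lambda_chi_pairing_lt0 (x : 'rV[R[i]]_n) (l : 'rV[int]_r) :
  unstable chis chi x -> is_lambda_chi chis Q chi x l -> pairing chi l < 0.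
Proof.
move=> [m [Xm chim_lt0]] [_ [_ lmin]].
have m0 : m != 0 by apply: contraTneq chim_lt0 => ->; rewrite pairingr0.
rewrite -(ratio_lt0 hQ); apply: le_lt_trans (lmin m m0 Xm) _.
by rewrite (ratio_lt0 hQ).
Qed.

Lemma S_chi_supp (l : 'rV[int]_r) (x y : 'rV[R[i]]_n) :
  S_chi chis Q chi l y -> X_lam chis l x ->
  (forall i, x 0 i = 0 -> y 0 i = 0) -> S_chi chis Q chi l x.
Proof.
move=> [unst_y lam_y] Xx supp_yx.
have chil_lt0 := lambda_chi_pairing_lt0 unst_y lam_y.
case: lam_y => ind_l [_ lmin].
split; first by exists l.
split=> //; split=> // m m0 Xm.
exact/lmin/(X_lam_supp supp_yx).
Qed.

End Instability.

Theorem lemma3p15 (R : realType) (n r : nat) (chis : 'I_n -> 'rV[int]_r)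
  (Q : 'M[int]_r) (hQ : inner_product_mx R Q)
  (chi lam : 'rV[int]_r) (hlam : Lambda_chi R chis Q chi lam) :
  let P := fun M : {set 'I_n} =>
    forall x : 'rV[R[i]]_n, Lset M x -> S_chi chis Q chi lam x in
  let M := [set i : 'I_n | 0 <= pairing (chis i) lam] in
  (* M has the property and is maximal *)
  (P M /\ (forall M' : {set 'I_n}, P M' -> M \subset M' -> M' = M)) /\
  (* every maximal subset with the property equals M (uniqueness) *)
  (forall M' : {set 'I_n}, P M' ->
     (forall M'' : {set 'I_n}, P M'' -> M' \subset M'' -> M'' = M') -> M' = M) /\
  (* V([n] \ M) = X_lambda *)
  (forall x : 'rV[R[i]]_n, Vset (~: M) x <-> X_lam chis lam x).
Proof.
move=> P M.
have XV x : Vset (~: M) x <-> X_lam chis lam x := Vset_nonneg_compl chis lam x.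
case: hlam => x0 Sx0.
have PM : P M.
  move=> x Lx; apply: (S_chi_supp hQ Sx0); first exact/XV/Lset_Vset_compl.
  exact/(Lset_Vset_supp Lx)/XV/(S_chi_X_lam Sx0).
have greatest M' : P M' -> M' \subset M.
  move=> PM'; have Lind := Lset_indicator R M'.
  exact/(Lset_Vset_subset Lind)/XV/(S_chi_X_lam (PM' _ Lind)).
have [maxM uniqM] := greatest_unique_maximal PM greatest.
by split; [split | split].
Qed.
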